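(* For all distinct positive real numbers $a$ and $b$, $$1< \frac{I(a,b)}{\sqrt{I\big(A(a,b)^2,G(a,b)^2\big)}} < \frac{2}{\sqrt{e}}.$$ Both bounds are sharp (the constants $1$ and $2/\sqrt e$ cannot be replaced by larger, respectively smaller, constants).
   Context: For positive reals $x\neq y$: arithmetic mean $A(x,y)=\frac{x+y}{2}$, geometric mean $G(x,y)=\sqrt{xy}$, and identric mean $I(x,y)=\frac{1}{e}\left(\frac{x^x}{y^y}\right)^{1/(x-y)}$. *)

From Stdlib Require Import Reals.
Open Scope R_scope.

Definition AM (x y : R) : R := (x + y) / 2.
Definition GM (x y : R) : R := sqrt (x * y).
Definition IM (x y : R) : R :=
  / exp 1 * Rpower (Rpower x x / Rpower y y) (/ (x - y)).

Definition ratio (a b : R) : R :=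
  IM a b / sqrt (IM (AM a b ^ 2) (GM a b ^ 2)).

(* Writing a = A(1+t) and b = A(1-t), the logarithm of the ratio equals
   (psi t / t^2 - 1) / 2 with psi t = (1+t) ln(1+t) + (1-t) ln(1-t).  The even
   function psi t / t^2 increases on (0,1) from its limit 1 at 0
   (psi t = t^2 + t^4/6 + ...) to its limit 2 ln 2 at 1, and attains neither;
   this gives both bounds and their sharpness.  The inequalities on psi are
   obtained by differentiating until the sign is evident. *)

From Stdlib Require Import Reals Lra.
From Coquelicot Require Import Coquelicot.
Open Scope R_scope.

Lemma lt_of_derive_pos (f f' : R -> R) (a b : R) : a < b ->
  (forall x, a <= x <= b -> is_derive f x (f' x)) ->
  (forall x, a < x < b -> 0 < f' x) -> f a < f b.
Proof.
intros hab hd hp.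
destruct (MVT_cor2 f f' a b hab) as [c [hc1 hc2]].
{ intros c hc; apply is_derive_Reals; auto. }
assert (0 < f' c * (b - a)) by (apply Rmult_lt_0_compat; [apply hp; lra | lra]).
lra.
Qed.

Lemma pos_of_derive_pos (f f' : R -> R) (t : R) : 0 < t -> f 0 = 0 ->
  (forall x, 0 <= x <= t -> is_derive f x (f' x)) ->
  (forall x, 0 < x < t -> 0 < f' x) -> 0 < f t.
Proof. intros ht h0 hd hp; rewrite <- h0; exact (lt_of_derive_pos f f' 0 t ht hd hp). Qed.

Definition psi (t : R) : R := (1 + t) * ln (1 + t) + (1 - t) * ln (1 - t).

Lemma psi_opp (t : R) : psi (- t) = psi t.
Proof.
unfold psi; replace (1 + - t) with (1 - t) by ring; replace (1 - - t) with (1 + t) by ring.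
ring.
Qed.

Lemma ln_ratio_gt (t : R) : 0 < t < 1 -> 2 * t < ln (1 + t) - ln (1 - t).
Proof.
intros ht.
assert (H : 0 < ln (1 + t) - ln (1 - t) - 2 * t); [|lra].
apply (pos_of_derive_pos (fun x => ln (1 + x) - ln (1 - x) - 2 * x)
         (fun x => 2 * x ^ 2 / ((1 + x) * (1 - x)))); [lra | | |].
- rewrite !Rplus_0_r, !Rminus_0_r, ln_1; ring.
- intros x hx; auto_derive; [lra |]; field; lra.
- intros x hx; apply Rdiv_lt_0_compat; nra.
Qed.

Lemma sqr_lt_psi (t : R) : 0 < t < 1 -> t ^ 2 < psi t.
Proof.
intros ht.
assert (H : 0 < psi t - t ^ 2); [|lra].
apply (pos_of_derive_pos (fun x => psi x - x ^ 2)
         (fun x => ln (1 + x) - ln (1 - x) - 2 * x)); [lra | | |].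
- unfold psi; rewrite !Rplus_0_r, !Rminus_0_r, ln_1; ring.
- intros x hx; unfold psi; auto_derive; [lra |]; unfold Rminus; field; lra.
- intros x hx; pose proof (ln_ratio_gt x ltac:(lra)); lra.
Qed.

Lemma ln_ratio_lt (t : R) : 0 < t < 1 / 2 ->
  ln (1 + t) - ln (1 - t) < 2 * t + 8 * t ^ 3 / 3.
Proof.
intros ht.
assert (H : 0 < 2 * t + 8 * t ^ 3 / 3 - (ln (1 + t) - ln (1 - t))); [|lra].
apply (pos_of_derive_pos (fun x => 2 * x + 8 * x ^ 3 / 3 - (ln (1 + x) - ln (1 - x)))
         (fun x => 2 * x ^ 2 * (3 - 4 * x ^ 2) / ((1 + x) * (1 - x)))); [lra | | |].
- rewrite !Rplus_0_r, !Rminus_0_r, ln_1; unfold Rdiv; ring.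
- intros x hx; auto_derive; [lra |]; field; lra.
- intros x hx; apply Rdiv_lt_0_compat; [|nra].
  apply Rmult_lt_0_compat; nra.
Qed.

Lemma psi_lt_quartic (t : R) : 0 < t < 1 / 2 -> psi t < t ^ 2 + 2 * t ^ 4 / 3.
Proof.
intros ht.
assert (H : 0 < t ^ 2 + 2 * t ^ 4 / 3 - psi t); [|lra].
apply (pos_of_derive_pos (fun x => x ^ 2 + 2 * x ^ 4 / 3 - psi x)
         (fun x => 2 * x + 8 * x ^ 3 / 3 - (ln (1 + x) - ln (1 - x)))); [lra | | |].
- unfold psi; rewrite !Rplus_0_r, !Rminus_0_r, ln_1; unfold Rdiv; ring.
- intros x hx; unfold psi; auto_derive; [lra |]; unfold Rminus; field; lra.
- intros x hx; pose proof (ln_ratio_lt x ltac:(lra)); lra.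
Qed.

Lemma ln_ratio_lt_frac (t : R) : 0 < t < 1 ->
  ln (1 + t) - ln (1 - t) < 2 * t / (1 - t ^ 2).
Proof.
intros ht.
assert (H : 0 < 2 * t / (1 - t ^ 2) - (ln (1 + t) - ln (1 - t))); [|lra].
apply (pos_of_derive_pos (fun x => 2 * x / (1 - x ^ 2) - (ln (1 + x) - ln (1 - x)))
         (fun x => 4 * x ^ 2 / (1 - x ^ 2) ^ 2)); [lra | | |].
- rewrite !Rplus_0_r, !Rminus_0_r, ln_1; unfold Rdiv; ring.
- intros x hx; auto_derive; [repeat split; nra |]; unfold Rminus; field; nra.
- intros x hx; apply Rdiv_lt_0_compat; [nra | apply pow_lt; nra].
Qed.

Lemma weighted_ln_sum_neg (t : R) : 0 < t < 1 ->
  (2 + t) * ln (1 + t) + (2 - t) * ln (1 - t) < 0.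
Proof.
intros ht.
assert (H : 0 < - ((2 + t) * ln (1 + t) + (2 - t) * ln (1 - t))); [|lra].
apply (pos_of_derive_pos (fun x => - ((2 + x) * ln (1 + x) + (2 - x) * ln (1 - x)))
         (fun x => 2 * x / (1 - x ^ 2) - (ln (1 + x) - ln (1 - x)))); [lra | | |].
- rewrite !Rplus_0_r, !Rminus_0_r, ln_1; ring.
- intros x hx; auto_derive; [lra |]; unfold Rminus; field; nra.
- intros x hx; pose proof (ln_ratio_lt_frac x ltac:(lra)); lra.
Qed.

Lemma psi_div_sqr_increasing (x y : R) : 0 < x -> x < y -> y < 1 ->
  psi x / x ^ 2 < psi y / y ^ 2.
Proof.
intros hx hxy hy.
apply (lt_of_derive_pos (fun z => psi z / z ^ 2)
         (fun z => - ((2 + z) * ln (1 + z) + (2 - z) * ln (1 - z)) / z ^ 3)); [lra | |].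
- intros z hz; unfold psi; auto_derive; [repeat split; nra |]; unfold Rminus; field; nra.
- intros z hz; apply Rdiv_lt_0_compat; [| apply pow_lt; lra].
  pose proof (weighted_ln_sum_neg z ltac:(lra)); lra.
Qed.

Lemma psi_le_2ln2 (s : R) : 0 < s < 1 -> psi s <= 2 * ln 2.
Proof.
intros hs; unfold psi.
assert (0 <= ln (1 + s)) by (rewrite <- ln_1; left; apply ln_increasing; lra).
assert (ln (1 + s) <= ln 2) by (left; apply ln_increasing; lra).
assert (ln (1 - s) < 0) by (rewrite <- ln_1; apply ln_increasing; lra).
nra.
Qed.

Lemma le_of_forall_mul_sqr_le (x K s0 : R) : 0 <= K -> 0 <= s0 < 1 ->
  (forall s, s0 < s < 1 -> x * s ^ 2 <= K) -> x <= K.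
Proof.
intros hK hs0 hbound.
destruct (Rle_or_lt x K) as [|hxK]; [assumption | exfalso].
set (m := Rmax s0 (K / x)).
assert (hKx : K / x < 1) by (apply Rmult_lt_reg_r with x; [lra|];
  unfold Rdiv; rewrite Rmult_assoc, Rinv_l; lra).
assert (hm : s0 <= m /\ K / x <= m /\ m < 1)
  by (unfold m; repeat split; [apply Rmax_l | apply Rmax_r | apply Rmax_lub_lt; lra]).
set (s := (1 + m) / 2).
assert (hs : m < s ^ 2) by (unfold s; nra).
assert (K < x * s ^ 2).
{ apply Rle_lt_trans with (x * (K / x)); [right; field; lra|].
  apply Rmult_lt_compat_l; lra. }
pose proof (hbound s ltac:(unfold s; lra)); lra.
Qed.

(* psi t' / t'^2 <= psi s / s^2 <= 2 ln 2 / s^2 for t' < s < 1; let s tend to 1. *)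
Lemma psi_div_sqr_lt_2ln2 (t : R) : 0 < t < 1 -> psi t / t ^ 2 < 2 * ln 2.
Proof.
intros ht.
set (t' := (1 + t) / 2).
assert (hle : psi t' / t' ^ 2 <= 2 * ln 2).
{ apply (le_of_forall_mul_sqr_le _ _ t'); [| unfold t'; lra |].
  - left; apply Rmult_lt_0_compat; [lra|]; rewrite <- ln_1; apply ln_increasing; lra.
  - intros s hs.
    apply Rle_trans with (psi s / s ^ 2 * s ^ 2).
    + apply Rmult_le_compat_r; [nra|].
      left; apply psi_div_sqr_increasing; unfold t' in *; lra.
    + replace (psi s / s ^ 2 * s ^ 2) with (psi s) by (field; unfold t' in *; lra).
      apply psi_le_2ln2; unfold t' in *; lra. }
pose proof (psi_div_sqr_increasing t t' ltac:(lra) ltac:(unfold t'; lra) ltac:(unfold t'; lra)).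
lra.
Qed.

Lemma psi_near_1_ge (s : R) : 0 < s <= 1 / 2 -> 2 * ln 2 - 2 * s <= psi (1 - s ^ 2).
Proof.
intros hs; unfold psi.
replace (1 + (1 - s ^ 2)) with (2 * (1 - s ^ 2 / 2)) by field.
replace (1 - (1 - s ^ 2)) with (s * s) by ring.
rewrite !ln_mult by nra.
assert (hln : forall x, 0 < x -> 1 - / x <= ln x).
{ intros x hx; pose proof (exp_ineq1_le (ln (/ x))) as H.
  rewrite exp_ln, ln_Rinv in H by (try apply Rinv_0_lt_compat; lra); lra. }
assert (q1 : - s ^ 2 <= (2 - s ^ 2) * ln (1 - s ^ 2 / 2)).
{ apply Rle_trans with ((2 - s ^ 2) * (1 - / (1 - s ^ 2 / 2))).
  - right; field; nra.
  - apply Rmult_le_compat_l; [nra | apply hln; nra]. }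
assert (q2 : s - 1 <= s * ln s).
{ apply Rle_trans with (s * (1 - / s)).
  - right; field; lra.
  - apply Rmult_le_compat_l; [lra | apply hln; lra]. }
assert (0 < ln 2) by (rewrite <- ln_1; apply ln_increasing; lra).
assert (ln 2 < 1).
{ apply Rlt_le_trans with (ln (exp 1)); [apply ln_increasing; [lra|] | rewrite ln_exp; lra].
  pose proof (exp_ineq1 1); lra. }
nra.
Qed.

Lemma IM_exp (x y : R) : IM x y = exp ((x * ln x - y * ln y) / (x - y) - 1).
Proof.
unfold IM, Rpower; rewrite <- exp_Ropp, <- exp_plus; unfold Rdiv at 1.
rewrite ln_mult, ln_Rinv, !ln_exp by (try apply Rinv_0_lt_compat; apply exp_pos).
f_equal; unfold Rdiv; ring.
Qed.

Lemma sqrt_exp (z : R) : sqrt (exp z) = exp (z / 2).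
Proof.
rewrite <- (sqrt_square (exp (z / 2))) by (left; apply exp_pos).
f_equal; rewrite <- exp_plus; f_equal; field.
Qed.

Lemma ratio_scaled (A t : R) : 0 < A -> -1 < t < 1 -> t <> 0 ->
  ratio (A * (1 + t)) (A * (1 - t)) = exp ((psi t / t ^ 2 - 1) / 2).
Proof.
intros hA ht ht0.
unfold ratio, AM, GM; rewrite pow2_sqrt by (apply Rmult_le_pos; apply Rmult_le_pos; lra).
replace ((A * (1 + t) + A * (1 - t)) / 2) with A by field.
rewrite !IM_exp, sqrt_exp; unfold Rdiv at 1; rewrite <- exp_Ropp, <- exp_plus; f_equal.
replace (A * (1 + t) * (A * (1 - t))) with (A ^ 2 * ((1 + t) * (1 - t))) by ring.
rewrite !ln_mult, ln_pow by nra; replace (INR 2) with 2 by (simpl; ring).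
assert (hAt : A * t <> 0) by (apply Rmult_integral_contrapositive_currified; lra).
unfold psi; field; repeat split; [assumption | |].
- replace (A ^ 2 - A ^ 2 * ((1 + t) * (1 - t))) with ((A * t) ^ 2) by ring.
  apply pow_nonzero, hAt.
- replace (A * (1 + t) - A * (1 - t)) with (2 * (A * t)) by ring.
  apply Rmult_integral_contrapositive_currified; [lra | exact hAt].
Qed.

Lemma psi_div_sqr_bounds (t : R) : -1 < t < 1 -> t <> 0 ->
  1 < psi t / t ^ 2 < 2 * ln 2.
Proof.
intros ht ht0.
assert (hpos : forall u, 0 < u < 1 -> 1 < psi u / u ^ 2 < 2 * ln 2).
{ intros u hu; split; [| exact (psi_div_sqr_lt_2ln2 u hu)].
  apply Rmult_lt_reg_r with (u ^ 2); [nra|].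
  replace (psi u / u ^ 2 * u ^ 2) with (psi u) by (field; lra).
  rewrite Rmult_1_l; exact (sqr_lt_psi u hu). }
destruct (Rlt_or_le 0 t) as [|hneg]; [apply hpos; lra|].
rewrite <- psi_opp; replace (t ^ 2) with ((- t) ^ 2) by ring.
apply hpos; lra.
Qed.

Lemma relative_difference_range (a b : R) : 0 < a -> 0 < b -> a <> b ->
  -1 < (a - b) / (a + b) < 1 /\ (a - b) / (a + b) <> 0.
Proof.
intros ha hb hab; split.
- split; apply Rmult_lt_reg_r with (a + b); try lra;
    unfold Rdiv; rewrite Rmult_assoc, Rinv_l; lra.
- unfold Rdiv; apply Rmult_integral_contrapositive_currified;
    [lra | apply Rinv_neq_0_compat; lra].
Qed.

Lemma ratio_eq (a b : R) : 0 < a -> 0 < b -> a <> b ->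
  ratio a b = exp ((psi ((a - b) / (a + b)) / ((a - b) / (a + b)) ^ 2 - 1) / 2).
Proof.
intros ha hb hab.
destruct (relative_difference_range a b ha hb hab) as [ht ht0].
rewrite <- (ratio_scaled ((a + b) / 2)) by (auto; lra).
f_equal; field; lra.
Qed.

Lemma upper_bound_exp : 2 / sqrt (exp 1) = exp ((2 * ln 2 - 1) / 2).
Proof.
rewrite sqrt_exp; replace ((2 * ln 2 - 1) / 2) with (ln 2 + - (1 / 2)) by field.
rewrite exp_plus, exp_Ropp, exp_ln by lra; reflexivity.
Qed.

Lemma ratio_bounds (a b : R) : 0 < a -> 0 < b -> a <> b ->
  1 < ratio a b /\ ratio a b < 2 / sqrt (exp 1).
Proof.
intros ha hb hab.
destruct (relative_difference_range a b ha hb hab) as [ht ht0].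
destruct (psi_div_sqr_bounds _ ht ht0) as [hlo hhi].
rewrite ratio_eq, upper_bound_exp by assumption; split.
- rewrite <- exp_0 at 1; apply exp_increasing; lra.
- apply exp_increasing; lra.
Qed.

Lemma ratio_lt_near_0 (t : R) : 0 < t < 1 / 2 -> ratio (1 + t) (1 - t) < exp (t ^ 2 / 3).
Proof.
intros ht.
rewrite <- (Rmult_1_l (1 + t)), <- (Rmult_1_l (1 - t)), ratio_scaled by lra.
apply exp_increasing.
assert (psi t / t ^ 2 < 1 + 2 * t ^ 2 / 3); [|lra].
apply Rmult_lt_reg_r with (t ^ 2); [nra|].
replace (psi t / t ^ 2 * t ^ 2) with (psi t) by (field; lra).
pose proof (psi_lt_quartic t ht); lra.
Qed.

Lemma ratio_gt_near_1 (s : R) : 0 < s <= 1 / 2 ->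
  exp ((2 * ln 2 - 1) / 2 - s) < ratio (2 - s ^ 2) (s ^ 2).
Proof.
intros hs.
set (t := 1 - s ^ 2).
assert (ht : 0 < t < 1) by (unfold t; nra).
replace (2 - s ^ 2) with (1 * (1 + t)) by (unfold t; ring).
replace (s ^ 2) with (1 * (1 - t)) by (unfold t; ring).
rewrite ratio_scaled by lra.
apply exp_increasing.
assert (hnear : 2 * ln 2 - 2 * s <= psi t) by exact (psi_near_1_ge s hs).
assert (psi t < psi t / t ^ 2); [|lra].
pose proof (sqr_lt_psi t ht).
apply Rmult_lt_reg_r with (t ^ 2); [nra|].
replace (psi t / t ^ 2 * t ^ 2) with (psi t) by (field; lra).
assert (0 < psi t) by nra.
assert (t ^ 2 < 1) by nra.
nra.
Qed.

Lemma ratio_arbitrarily_close_to_1 (c : R) : 1 < c ->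
  exists a b : R, 0 < a /\ 0 < b /\ a <> b /\ ratio a b < c.
Proof.
intros hc.
assert (hlc : 0 < ln c) by (rewrite <- ln_1; apply ln_increasing; lra).
set (t := Rmin (1 / 4) (ln c / 2)).
assert (ht : 0 < t <= 1 / 4 /\ t <= ln c / 2)
  by (unfold t; repeat split; [apply Rmin_glb_lt; lra | apply Rmin_l | apply Rmin_r]).
exists (1 + t), (1 - t); repeat split; try lra.
apply Rlt_trans with (exp (t ^ 2 / 3)); [apply ratio_lt_near_0; lra|].
rewrite <- (exp_ln c) by lra; apply exp_increasing; nra.
Qed.

Lemma ratio_arbitrarily_close_to_upper_bound (d : R) : d < 2 / sqrt (exp 1) ->
  exists a b : R, 0 < a /\ 0 < b /\ a <> b /\ d < ratio a b.
Proof.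
intros hd.
destruct (Rle_or_lt d 1) as [hd1 | hd1].
{ exists 2, 1; repeat split; try lra.
  pose proof (ratio_bounds 2 1 ltac:(lra) ltac:(lra) ltac:(lra)); lra. }
rewrite upper_bound_exp in hd.
assert (hld : ln d < (2 * ln 2 - 1) / 2)
  by (rewrite <- (ln_exp ((2 * ln 2 - 1) / 2)); apply ln_increasing; lra).
set (s := Rmin (1 / 2) (((2 * ln 2 - 1) / 2 - ln d) / 2)).
assert (hs : 0 < s <= 1 / 2 /\ s <= ((2 * ln 2 - 1) / 2 - ln d) / 2)
  by (unfold s; repeat split; [apply Rmin_glb_lt; lra | apply Rmin_l | apply Rmin_r]).
exists (2 - s ^ 2), (s ^ 2); repeat split; try nra.
apply Rlt_trans with (exp ((2 * ln 2 - 1) / 2 - s)); [| apply ratio_gt_near_1; lra].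
rewrite <- (exp_ln d) at 1 by lra; apply exp_increasing; lra.
Qed.

Theorem theorem1 :
  (forall a b : R, 0 < a -> 0 < b -> a <> b ->
     1 < ratio a b /\ ratio a b < 2 / sqrt (exp 1))
  /\ (forall c : R, 1 < c ->
        exists a b : R, 0 < a /\ 0 < b /\ a <> b /\ ratio a b < c)
  /\ (forall d : R, d < 2 / sqrt (exp 1) ->
        exists a b : R, 0 < a /\ 0 < b /\ a <> b /\ d < ratio a b).
Proof.
split; [exact ratio_bounds|].
split; [exact ratio_arbitrarily_close_to_1 | exact ratio_arbitrarily_close_to_upper_bound].
Qed.
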